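(* Let $p\in(1,\infty)$ and $q=\frac{p}{p-1}$. Let $G=(V,E)$ be a connected graph and let $A,B\subseteq V$ be non-empty disjoint subsets. Let $\widehat G=(\widehat V,\widehat E)$ be the graph with $\widehat V=V\cup\{v_x: x\in A\cup B\}$ (new formal vertices, one for each $x\in A\cup B$) and $\widehat E=E\cup\{\{v_x,x\}: x\in A\cup B\}$, and put $\widehat A=\{v_x:x\in A\}$, $\widehat B=\{v_x: x\in B\}$. There is a constant $C\ge 1$, depending only on $\deg(G)$ and continuously on $p\in(1,\infty)$, such that whenever $F$ is a unit flow from $A$ to $B$ in $G$ and $\widehat F$ is the unit flow from $\widehat A$ to $\widehat B$ in $\widehat G$ obtained by extending $F$ via \[ \widehat F(v_x,x):=\operatorname{div}(F)(x)=\sum_{\{x,y\}\in E}F(x,y)\quad (x\in A\cup B), \] (and $\widehat F(x,v_x)=-\widehat F(v_x,x)$), then \[ \mathcal E_q(\widehat F)\le C\cdot \mathcal E_q(F). \] Furthermore, $C$ can be chosen so that $C^{-p/q}$ is continuous in $p\in[1,\infty)$ (i.e. extends continuously to $p=1$).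
   Context: A graph is a pair $G=(V,E)$ with $V$ a finite non-empty set and $E\subseteq V\times V$ such that $(x,y)\in E$ implies $(y,x)\notin E$ (in particular there are no loops); we write $\{x,y\}\in E$ if $(x,y)\in E$ or $(y,x)\in E$. Paths and connectedness are taken in the underlying undirected graph. The degree of a vertex is the number of $y$ with $\{x,y\}\in E$, and $\deg(G)$ is the maximal degree. A function $F:V\times V\to\mathbb R$ is antisymmetric if $F(x,y)=-F(y,x)$ for all $x,y$ and $F(x,y)=0$ unless $\{x,y\}\in E$. Its divergence is $\operatorname{div}(F)(x)=\sum_{\{x,y\}\in E}F(x,y)$. For disjoint non-empty $A,B\subseteq V$, an antisymmetric $F$ is a flow from $A$ to $B$ if $\operatorname{div}(F)(x)=0$ for all $x\notin A\cup B$; its total flow is $I(F)=\sum_{x\in A}\operatorname{div}(F)(x)$, and it is a unit flow if $I(F)=1$. The $q$-energy of $F$ is $\mathcal E_q(F)=\sum_{\{x,y\}\in E}|F(x,y)|^q$, each unordered edge counted once. *)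

From HB Require Import structures.
From mathcomp Require Import all_boot all_order all_algebra.
From mathcomp Require Import all_classical all_reals all_analysis.
Set Implicit Arguments. Unset Strict Implicit. Unset Printing Implicit Defensive.
Import Order.TTheory GRing.Theory Num.Theory.
Import numFieldNormedType.Exports.
Local Open Scope ring_scope.

Section Graphs.
Variables (R : realType) (V : finType).

(* A graph on V: an oriented edge relation E with (x,y) in E => (y,x) notin E. *)
Definition is_graph (E : rel V) : Prop := forall x y, E x y -> ~~ E y x.

Definition adj (E : rel V) : rel V := fun x y => E x y || E y x.

Definition vdeg (E : rel V) (x : V) : nat := #|[set y | adj E x y]|.
Definition gdeg (E : rel V) : nat := (\max_(x : V) vdeg E x)%N.

Definition connected_graph (E : rel V) : Prop :=
  forall x y, connect (adj E) x y.

Definition antisymmetric_fun (E : rel V) (F : V -> V -> R) : Prop :=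
  (forall x y, F x y = - F y x) /\ (forall x y, ~~ adj E x y -> F x y = 0).

Definition divergence (E : rel V) (F : V -> V -> R) (x : V) : R :=
  \sum_(y | adj E x y) F x y.

Definition is_flow (E : rel V) (A B : {set V}) (F : V -> V -> R) : Prop :=
  antisymmetric_fun E F /\
  (forall x, x \notin A -> x \notin B -> divergence E F x = 0).

Definition total_flow (E : rel V) (A : {set V}) (F : V -> V -> R) : R :=
  \sum_(x in A) divergence E F x.

Definition unit_flow (E : rel V) (A B : {set V}) (F : V -> V -> R) : Prop :=
  is_flow E A B F /\ total_flow E A F = 1.

(* q-energy: each unordered edge counted once, i.e. once as its oriented pair in E *)
Definition energy (E : rel V) (q : R) (F : V -> V -> R) : R :=
  \sum_(x : V) \sum_(y | E x y) `|F x y| `^ q.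

End Graphs.

Section Hat.
Variables (R : realType) (V : finType) (E : rel V) (A B : {set V}).

Definition hatV : finType := (V + {x : V | x \in A :|: B})%type.

Definition hatE : rel hatV := fun u w =>
  match u, w with
  | inl x, inl y => E x y
  | inr vx, inl y => val vx == y
  | _, _ => false
  end.

Definition hatA : {set hatV} := [set u | if u is inr vx then val vx \in A else false].
Definition hatB : {set hatV} := [set u | if u is inr vx then val vx \in B else false].

Definition hatF (F : V -> V -> R) : hatV -> hatV -> R := fun u w =>
  match u, w with
  | inl x, inl y => F x y
  | inr vx, inl y => if val vx == y then divergence E F y else 0
  | inl y, inr vx => if val vx == y then - divergence E F y else 0
  | _, _ => 0
  end.

End Hat.

Definition conj_exp (R : realType) (p : R) : R := p / (p - 1).

Arguments hatE {V} E A B _ _.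
Arguments hatF {R V} E A B F _ _.
Arguments hatA {V} A B.
Arguments hatB {V} A B.

(* The extended energy is E_q(F) plus the sum of |div F(x)|^q over x in A u B.
   Each divergence is a sum of at most deg(G) edge values, so
   |div F(x)|^q <= (deg(G)+1)^q * sum_{y ~ x} |F(x,y)|^q, and summing over all x
   counts every edge twice.  Hence C = 3 (deg(G)+1)^q works (the +1 keeps
   (deg(G)+1)^q >= 1, so that 1 + 2 (deg(G)+1)^q <= C), and since
   p/q = p - 1 we get C^(-p/q) = 3^(1-p) (deg(G)+1)^(-p), continuous on [1, oo). *)
From HB Require Import structures.
From mathcomp Require Import all_boot all_order all_algebra.
From mathcomp Require Import all_classical all_reals all_analysis.
From mathcomp Require Import ring lra.
Import Order.TTheory GRing.Theory Num.Theory.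
Import numFieldNormedType.Exports.
Local Open Scope ring_scope.
Local Open Scope classical_set_scope.

Lemma powR_norm_sum_le (R : realType) (I : finType) (P : pred I) (a : I -> R)
    (q K : R) :
  0 < q -> #|P|%:R <= K ->
  `|\sum_(i | P i) a i| `^ q <= K `^ q * \sum_(i | P i) `|a i| `^ q.
Proof.
move=> q0 cardP.
have K0 : 0 <= K by apply: le_trans cardP.
set T := \sum_(i | P i) `|a i| `^ q.
have T0 : 0 <= T by apply: sumr_ge0 => i _; exact: powR_ge0.
have term_le i : P i -> `|a i| <= T `^ q^-1.
  move=> Pi; have -> : `|a i| = (`|a i| `^ q) `^ q^-1.
    by rewrite -powRrM mulfV ?gt_eqF // powRr1.
  apply: ge0_ler_powR; rewrite ?nnegrE ?powR_ge0 ?invr_ge0 ?(ltW q0) //.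
  by rewrite /T (bigD1 i) //= lerDl; apply: sumr_ge0 => j _; exact: powR_ge0.
have sum_le : `|\sum_(i | P i) a i| <= K * T `^ q^-1.
  apply: le_trans (ler_norm_sum _ _ _) _; apply: le_trans (ler_sum _ term_le) _.
  by rewrite sumr_const -mulr_natl ler_wpM2r ?powR_ge0.
apply: le_trans (ge0_ler_powR (ltW q0) _ _ sum_le) _;
  rewrite ?nnegrE ?mulr_ge0 ?powR_ge0 //.
by rewrite powRM ?powR_ge0 // -powRrM mulVf ?gt_eqF // powRr1.
Qed.

Section Energy.
Variables (R : realType) (V : finType) (E : rel V).

Lemma card_adj_le_gdeg (x : V) : (#|adj E x| <= gdeg E)%N.
Proof.
have -> : #|adj E x| = vdeg E x by apply: eq_card => y; rewrite inE.
exact: leq_bigmax.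
Qed.

Lemma energy_ge0 (q : R) (F : V -> V -> R) : 0 <= energy E q F.
Proof. by apply: sumr_ge0 => x _; apply: sumr_ge0 => y _; exact: powR_ge0. Qed.

Lemma powR_divergence_le (q : R) (F : V -> V -> R) (x : V) : 0 < q ->
  `|divergence E F x| `^ q
    <= (gdeg E).+1%:R `^ q * \sum_(y | adj E x y) `|F x y| `^ q.
Proof.
move=> q0; apply: powR_norm_sum_le => //.
by rewrite ler_nat leqW // card_adj_le_gdeg.
Qed.

Lemma sum_adj_powR_norm (q : R) (F : V -> V -> R) :
  is_graph E -> antisymmetric_fun E F ->
  \sum_x \sum_(y | adj E x y) `|F x y| `^ q = 2 * energy E q F.
Proof.
move=> graphE [antiF _].
set g := fun x y => `|F x y| `^ q.
have gC x y : g x y = g y x by rewrite /g antiF normrN.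
have split_adj x :
    \sum_(y | adj E x y) g x y = \sum_(y | E x y) g x y + \sum_(y | E y x) g x y.
  rewrite big_mkcond [X in _ = X + _]big_mkcond [X in _ = _ + X]big_mkcond.
  rewrite -big_split /=; apply: eq_bigr => y _; rewrite /adj.
  case Exy: (E x y); case Eyx: (E y x); rewrite /= ?addr0 ?add0r //.
  by move: (graphE _ _ Exy); rewrite Eyx.
have reversed : \sum_x \sum_(y | E y x) g x y = energy E q F.
  rewrite (eq_bigr (fun x => \sum_y (if E y x then g x y else 0))); last first.
    by move=> x _; rewrite big_mkcond.
  rewrite exchange_big /=; apply: eq_bigr => y _; rewrite [RHS]big_mkcond.
  by apply: eq_bigr => x _; case: ifP => // _; rewrite gC.
by rewrite (eq_bigr _ (fun x _ => split_adj x)) big_split /= reversed mulr2n mulrDl mul1r.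
Qed.

Lemma energy_hatE (A B : {set V}) (F : V -> V -> R) (q : R) :
  energy (hatE E A B) q (hatF E A B F) =
  energy E q F + \sum_(x in A :|: B) `|divergence E F x| `^ q.
Proof.
rewrite /energy big_sumType /=; congr (_ + _).
  by apply: eq_bigr => x _; rewrite big_sumType /= big_pred0_eq addr0.
rewrite [RHS]big_sub /=; apply: eq_bigr => vx _.
rewrite big_sumType /= big_pred0_eq addr0.
by rewrite (big_pred1 (val vx)) /= ?eqxx // => y; rewrite /= eq_sym.
Qed.

Lemma energy_hat_le (A B : {set V}) (F : V -> V -> R) (q : R) :
  is_graph E -> antisymmetric_fun E F -> 0 < q ->
  energy (hatE E A B) q (hatF E A B F)
    <= 3 * (gdeg E).+1%:R `^ q * energy E q F.
Proof.
move=> graphE antiF q0.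
set D := (gdeg E).+1%:R `^ q; set e := energy E q F.
have D1 : 1 <= D by rewrite /D -[leLHS](powRr0 (gdeg E).+1%:R) ler_powR ?ler1n ?ltW.
have e0 : 0 <= e := energy_ge0 q F.
have div_le : \sum_(x in A :|: B) `|divergence E F x| `^ q <= D * (2 * e).
  apply: (@le_trans _ _ (\sum_x `|divergence E F x| `^ q)).
    rewrite [leRHS](bigID [in A :|: B]) /= lerDl.
    by apply: sumr_ge0 => x _; exact: powR_ge0.
  rewrite -sum_adj_powR_norm // big_distrr /=; apply: ler_sum => x _.
  exact: powR_divergence_le.
rewrite energy_hatE -/e; nra.
Qed.

End Energy.

Section ConjugateExponent.
Context {R : realType}.
Implicit Types (p : R) (d : nat).

Lemma conj_exp_ge1 {p} : 1 < p -> 1 <= conj_exp p.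
Proof. by move=> p1; rewrite /conj_exp ler_pdivlMr ?subr_gt0 //; lra. Qed.

Lemma div_conj_exp p : p != 0 -> p / conj_exp p = p - 1.
Proof. by move=> p0; rewrite /conj_exp invf_div mulrC divfK. Qed.

Lemma conj_exp_continuous p : p != 1 -> {for p, continuous (@conj_exp R)}.
Proof.
move=> p_neq1; apply: cvgM; first exact: cvg_id.
by apply: cvgV; [rewrite subr_eq0 | apply: cvgB; [exact: cvg_id | exact: cvg_cst]].
Qed.

Definition ext_const d p : R := 3 * d.+1%:R `^ conj_exp p.

Lemma ext_const_ge1 d p : 1 < p -> 1 <= ext_const d p.
Proof.
move=> p1; have : 1 <= d.+1%:R `^ conj_exp p.
  rewrite -[leLHS](powRr0 d.+1%:R) ler_powR ?ler1n //.
  by have := conj_exp_ge1 p1; lra.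
rewrite /ext_const; lra.
Qed.

Lemma ext_constE d p : ext_const d p = 3 * expR (conj_exp p * ln d.+1%:R).
Proof. by rewrite /ext_const /powR pnatr_eq0. Qed.

Lemma ext_const_continuous d p : 1 < p -> {for p, continuous (ext_const d)}.
Proof.
move=> p1; rewrite (funext (ext_constE d)).
apply: cvgM; first exact: cvg_cst.
apply: (continuous_comp (f := fun p => conj_exp p * ln d.+1%:R));
  last exact: continuous_expR.
by apply: cvgM; [apply: conj_exp_continuous; rewrite gt_eqF | exact: cvg_cst].
Qed.

Lemma ext_const_powR_div d p : 1 < p ->
  ext_const d p `^ (- (p / conj_exp p)) = expR ((1 - p) * ln 3 - p * ln d.+1%:R).
Proof.
move=> p1; have p0 : p != 0 by rewrite gt_eqF //; lra.
have p1_neq0 : p - 1 != 0 by rewrite subr_eq0 gt_eqF.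
rewrite div_conj_exp // ext_constE /powR mulf_eq0 expR_eq0 orbF pnatr_eq0 /=.
rewrite lnM ?posrE ?expR_gt0 // expRK /conj_exp; congr expR.
by field.
Qed.

End ConjugateExponent.

Theorem lemma2p12 (R : realType) :
  exists C : nat -> R -> R,
    (forall (d : nat) (p : R), 1 < p -> 1 <= C d p) /\
    (forall (d : nat) (p : R), 1 < p -> {for p, continuous (C d)}) /\
    (forall d : nat, exists g : R -> R,
        {within `[1, +oo[, continuous g} /\
        (forall p : R, 1 < p -> g p = C d p `^ (- (p / conj_exp p)))) /\
    (forall (V : finType) (E : rel V) (A B : {set V}) (F : V -> V -> R) (p : R),
        1 < p ->
        is_graph E -> connected_graph E ->
        A != finset.set0 -> B != finset.set0 -> disjoint (mem A) (mem B) ->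
        unit_flow E A B F ->
        energy (hatE E A B) (conj_exp p) (hatF E A B F)
          <= C (gdeg E) p * energy E (conj_exp p) F).
Proof.
exists (@ext_const R); split; first exact: ext_const_ge1.
split; first exact: ext_const_continuous.
split.
  move=> d; exists (fun p => expR ((1 - p) * ln 3 - p * ln d.+1%:R)).
  split; last by move=> p p1; rewrite ext_const_powR_div.
  apply: continuous_subspaceT => p.
  apply: (continuous_comp (f := fun p : R => (1 - p) * ln 3 - p * ln d.+1%:R));
    last exact: continuous_expR.
  apply: cvgB; apply: cvgM; try exact: cvg_cst; try exact: cvg_id.
  by apply: cvgB; [exact: cvg_cst | exact: cvg_id].
move=> V E A B F p p1 graphE _ _ _ _ [[antiF _] _].
by apply: energy_hat_le => //; have := conj_exp_ge1 p1; lra.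
Qed.
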